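(* Let $D_0=\mathbb{D}$ and $D_j=D_{j-1}\setminus\mathcal{Z}_{j-1}$ for $j=1,2,\dots$, where each $\mathcal{Z}_{j-1}$ is a discrete set in $D_{j-1}$. Then every $D_j$ has the $3$-rd Hindmarsh property.
   Context: $\mathbb{D}$ is the open unit disk. A set $\mathcal{Z}\subset D$ is discrete in $D$ if it is at most countable with no accumulation points in $D$. A Schur function is an analytic $S:\mathbb{D}\to\mathbb{C}$ with $|S|\le1$. Pick matrix: $P_k(f;z_1,\dots,z_k)=\left[\frac{1-f(z_i)\overline{f(z_j)}}{1-z_i\overline{z_j}}\right]_{i,j=1}^k$. For an integer $k\ge3$, an open set $D\subseteq\mathbb{D}$ has the $k$-th Hindmarsh property if every function $f:D\to\mathbb{C}$ such that $P_k(f;z_1,\dots,z_k)$ is positive semidefinite for every choice of distinct $z_1,\dots,z_k\in D$ admits an extension to a Schur function on $\mathbb{D}$. Hindmarsh's theorem (may be assumed): $\mathbb{D}$ has the $3$-rd Hindmarsh property; more precisely, if $U\subseteq\mathbb{D}$ is open and $f:U\to\mathbb{C}$ has $P_3(f;z_1,z_2,z_3)\ge0$ for all $z_1,z_2,z_3\in U$, then $f$ is analytic on $U$ with $|f|\le1$. *)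

From Stdlib Require Import Reals.
From Coquelicot Require Import Coquelicot.
Open Scope R_scope.

Definition unit_disk (z : C) : Prop := Cmod z < 1.

Definition analytic_on (U : C -> Prop) (f : C -> C) : Prop :=
  forall z, U z -> @ex_derive C_AbsRing C_NormedModule f z.

Definition schur_function (S : C -> C) : Prop :=
  analytic_on unit_disk S /\ forall z, unit_disk z -> Cmod (S z) <= 1.

Definition at_most_countable (Z : C -> Prop) : Prop :=
  exists e : nat -> C, forall z, Z z -> exists n, e n = z.

Definition discrete_in (Z D : C -> Prop) : Prop :=
  (forall z, Z z -> D z) /\ at_most_countable Z /\
  forall w, D w -> exists eps : R, 0 < eps /\
    forall z, Z z -> 0 < Cmod (z - w) < eps -> False.

Definition pick_entry (f : C -> C) (z : nat -> C) (i j : nat) : C :=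
  ((1 - f (z i) * Cconj (f (z j))) / (1 - z i * Cconj (z j)))%C.

Definition pick_form (k : nat) (f : C -> C) (z : nat -> C) (c : nat -> C) : C :=
  sum_n (fun i => sum_n (fun j => (Cconj (c i) * pick_entry f z i j * c j)%C) (k - 1))
        (k - 1).

Definition pick_psd (k : nat) (f : C -> C) (z : nat -> C) : Prop :=
  forall c : nat -> C, Im (pick_form k f z c) = 0 /\ 0 <= Re (pick_form k f z c).

Definition hindmarsh_property (k : nat) (D : C -> Prop) : Prop :=
  open D /\ (forall z, D z -> unit_disk z) /\
  forall f : C -> C,
    (forall z : nat -> C,
        (forall i, (i < k)%nat -> D (z i)) ->
        (forall i j, (i < k)%nat -> (j < k)%nat -> i <> j -> z i <> z j) ->
        pick_psd k f z) ->
    exists S : C -> C, schur_function S /\ forall z, D z -> S z = f z.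

From Stdlib Require Import Reals Lra Psatz Classical.
From Stdlib Require Import FunctionalExtensionality PropExtensionality IndefiniteDescription.
From Coquelicot Require Import Coquelicot.
Open Scope R_scope.

(* Removing a discrete set from an open dense subset of the disk leaves an open dense subset,
   so every [D_j] is open and dense in the disk, and it suffices to show: if the 3x3 Pick
   matrices of [f] are positive semidefinite on a dense set [E], then [f] extends to a Schur
   function.  Positivity of the 2x2 principal minors gives [|f| <= 1] and the Schwarz-Pick
   inequality, so [f] is locally Lipschitz on [E] and extends to the disk by continuity; the
   3x3 positivity survives the limit.  This reduces everything to Hindmarsh's theorem on the
   disk, proved by one step of the Schur algorithm: for [|S a| < 1] the function
   [g = blaschke (S a) o S / blaschke a] has positive 2x2 Pick matrices (a Schur complement of
   the 3x3 ones), hence is locally Lipschitz and has a limit at [a], and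
   [S z - S a = (z - a) g z (1 - conj (S a) S z) / (1 - conj a z)] makes [S] differentiable
   at [a].  If [|S a| = 1], the Schwarz-Pick inequality forces [S] to be constant. *)

Lemma Cconj_RtoC (r : R) : Cconj (RtoC r) = RtoC r.
Proof. unfold Cconj, RtoC; simpl; f_equal; ring. Qed.

(* Unlike [Cinv_conj], no nonzero hypothesis is needed: both sides are [0] at [0]. *)
Lemma Cconj_inv (x : C) : Cconj (/ x) = (/ Cconj x)%C.
Proof.
  destruct x as [a b]; unfold Cconj, Cinv; simpl.
  replace (a * (a * 1) + - b * (- b * 1)) with (a * (a * 1) + b * (b * 1)) by ring.
  f_equal; unfold Rdiv; ring.
Qed.

Lemma Cconj_div (x y : C) : Cconj (x / y) = (Cconj x / Cconj y)%C.
Proof. unfold Cdiv. rewrite Cmult_conj, Cconj_inv. reflexivity. Qed.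

Ltac simpl_Cconj :=
  repeat rewrite ?Cconj_div, ?Cmult_conj, ?Cminus_conj, ?Cplus_conj, ?Copp_conj,
    ?Cconj_inv, ?Cconj_conj, ?Cconj_RtoC.

Lemma Cconj_neq0 (x : C) : x <> 0 -> Cconj x <> 0.
Proof. intros Hx E. apply Hx. rewrite <- (Cconj_conj x), E. apply Cconj_RtoC. Qed.

Lemma Cconj_neq (x y : C) : x <> y -> Cconj x <> Cconj y.
Proof. intros Hxy E. apply Hxy. rewrite <- (Cconj_conj x), E, Cconj_conj. reflexivity. Qed.

Lemma Cminus_neq0 (x y : C) : x <> y -> (x - y)%C <> 0.
Proof. intros Hxy E. apply Hxy, Ceq_minus, E. Qed.

Lemma Cmod_sqr (z : C) : Cmod z ^ 2 = fst z ^ 2 + snd z ^ 2.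
Proof. rewrite Cmod2_alt. reflexivity. Qed.

Lemma Cmod_RtoC_nonneg (r : R) : 0 <= r -> Cmod (RtoC r) = r.
Proof. intros. rewrite Cmod_R. apply Rabs_right. lra. Qed.

Lemma Cmod_sub_diag (z : C) : Cmod (z - z) = 0.
Proof. replace (z - z)%C with (RtoC 0) by ring. apply Cmod_0. Qed.

Lemma Cmod_sub_sym (a b : C) : Cmod (a - b) = Cmod (b - a).
Proof. rewrite <- Cmod_opp. f_equal. ring. Qed.

Lemma Cmod_sub_le (a b : C) : Cmod (a - b) <= Cmod a + Cmod b.
Proof. unfold Cminus. rewrite <- (Cmod_opp b). apply Cmod_triangle. Qed.

Lemma Cmod_sub_ge (a b : C) : Cmod a - Cmod b <= Cmod (a - b).
Proof.
  assert (Cmod a <= Cmod (a - b) + Cmod b).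
  { replace a with ((a - b) + b)%C at 1 by ring. apply Cmod_triangle. }
  lra.
Qed.

Lemma one_sub_conj_mul_neq0 (x y : C) :
  Cmod x < 1 -> Cmod y <= 1 -> (1 - Cconj x * y)%C <> 0.
Proof.
  intros Hx Hy E.
  assert (H1 : Cmod (Cconj x * y) = 1).
  { replace (Cconj x * y)%C with (RtoC 1) by (rewrite <- (Cplus_0_l (Cconj x * y)), <- E; ring).
    apply Cmod_1. }
  rewrite Cmod_mult, Cmod_conj in H1. pose proof (Cmod_ge_0 x). pose proof (Cmod_ge_0 y). nra.
Qed.

Lemma one_sub_mul_conj_neq0 (x y : C) :
  Cmod x < 1 -> Cmod y <= 1 -> (1 - x * Cconj y)%C <> 0.
Proof.
  intros Hx Hy E. apply (one_sub_conj_mul_neq0 x y Hx Hy).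
  replace (1 - Cconj x * y)%C with (Cconj (1 - x * Cconj y)) by (simpl_Cconj; reflexivity).
  rewrite E. apply Cconj_RtoC.
Qed.

Lemma Cmod_one_sub_mul_conj (x y : C) :
  Cmod (1 - x * Cconj y) ^ 2 = (1 - Cmod x ^ 2) * (1 - Cmod y ^ 2) + Cmod (x - y) ^ 2.
Proof. rewrite !Cmod_sqr. destruct x as [a b], y as [c d]. simpl. ring. Qed.

Ltac solve_neq0 :=
  first
    [ solve [apply one_sub_conj_mul_neq0; auto; lra]
    | solve [apply one_sub_mul_conj_neq0; auto; lra]
    | solve [apply Cminus_neq0; auto]
    | solve [apply Cminus_neq0, Cconj_neq; auto]
    | solve [apply Cconj_neq; auto] ].

(** * The Pick kernel and two-point estimates *)

Definition pick_kernel (h : C -> C) (x y : C) : C :=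
  ((1 - h x * Cconj (h y)) / (1 - x * Cconj y))%C.

Lemma pick_kernel_conj h x y : Cconj (pick_kernel h x y) = pick_kernel h y x.
Proof.
  unfold pick_kernel. simpl_Cconj.
  rewrite (Cmult_comm (Cconj (h x))), (Cmult_comm (Cconj x)). reflexivity.
Qed.

Lemma pick_kernel_diag h z :
  Cmod z < 1 -> pick_kernel h z z = RtoC ((1 - Cmod (h z) ^ 2) / (1 - Cmod z ^ 2)).
Proof.
  intros Hz. unfold pick_kernel. rewrite <- !Cmod2_conj, RtoC_div, !RtoC_minus; [reflexivity|].
  pose proof (Cmod_ge_0 z). nra.
Qed.

Lemma pick_form3_expand f z c : pick_form 3 f z c =
  ((Cconj (c 0%nat) * pick_kernel f (z 0%nat) (z 0%nat) * c 0%nat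
    + Cconj (c 0%nat) * pick_kernel f (z 0%nat) (z 1%nat) * c 1%nat)
    + Cconj (c 0%nat) * pick_kernel f (z 0%nat) (z 2%nat) * c 2%nat
  + (Cconj (c 1%nat) * pick_kernel f (z 1%nat) (z 0%nat) * c 0%nat
    + Cconj (c 1%nat) * pick_kernel f (z 1%nat) (z 1%nat) * c 1%nat
    + Cconj (c 1%nat) * pick_kernel f (z 1%nat) (z 2%nat) * c 2%nat)
  + (Cconj (c 2%nat) * pick_kernel f (z 2%nat) (z 0%nat) * c 0%nat
    + Cconj (c 2%nat) * pick_kernel f (z 2%nat) (z 1%nat) * c 1%nat
    + Cconj (c 2%nat) * pick_kernel f (z 2%nat) (z 2%nat) * c 2%nat))%C.
Proof. unfold pick_form. simpl. repeat (rewrite sum_Sn || rewrite sum_O). reflexivity. Qed.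

Definition hform2 (A B B' D c0 c1 : C) : C :=
  (Cconj c0 * A * c0 + Cconj c0 * B * c1 + Cconj c1 * B' * c0 + Cconj c1 * D * c1)%C.

Lemma Re_hform2 A B D c0 c1 :
  Re (hform2 A B (Cconj B) D c0 c1) =
  (fst c0 ^ 2 + snd c0 ^ 2) * fst A + (fst c1 ^ 2 + snd c1 ^ 2) * fst D
  + 2 * ((fst c0 * fst B + snd c0 * snd B) * fst c1 - (fst c0 * snd B - snd c0 * fst B) * snd c1).
Proof.
  destruct A as [a1 a2], B as [b1 b2], D as [e1 e2], c0 as [p q], c1 as [r s].
  unfold hform2, Re, Cconj, Cmult, Cplus; simpl. ring.
Qed.

Lemma hform2_nonneg_minor (A B D : C) :
  (forall c0 c1, 0 <= Re (hform2 A B (Cconj B) D c0 c1)) ->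
  0 <= Re A /\ 0 <= Re D /\ Cmod B ^ 2 <= Re A * Re D.
Proof.
  intros H.
  assert (HA := H (RtoC 1) (RtoC 0)). assert (HD := H (RtoC 0) (RtoC 1)).
  assert (HAD := H (fst D, 0) (- fst B, snd B)).
  assert (Hline : forall t, 0 <= Re (hform2 A B (Cconj B) D (1, 0) (- (t * fst B), t * snd B)))
    by (intros; apply H).
  rewrite Re_hform2 in HA, HD, HAD. setoid_rewrite Re_hform2 in Hline. clear H.
  unfold RtoC in HA, HD; simpl in HA, HD, HAD, Hline.
  rewrite Cmod_sqr. unfold Re.
  destruct A as [a1 a2], B as [b1 b2], D as [e1 e2]; simpl in *.
  repeat split; try lra.
  destruct (Rlt_or_le 0 e1) as [He|He].
  - assert (e1 * (a1 * e1 - (b1 ^ 2 + b2 ^ 2)) >= 0) by nra. nra.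
  - (* if [Re D = 0], the form is affine along a line in [c1] and so forces [B = 0] *)
    assert (e1 = 0) by lra. subst e1.
    destruct (Rlt_or_le 0 (b1 ^ 2 + b2 ^ 2)) as [Hb|Hb]; [|nra].
    set (t := (a1 + 1) / (2 * (b1 ^ 2 + b2 ^ 2))).
    specialize (Hline t).
    assert (2 * t * (b1 ^ 2 + b2 ^ 2) = a1 + 1) by (unfold t; field; lra).
    nra.
Qed.

Definition schwarz_pick_ineq (s t z w : C) : Prop :=
  Cmod (s - t) ^ 2 * Cmod (1 - z * Cconj w) ^ 2 <= Cmod (1 - s * Cconj t) ^ 2 * Cmod (z - w) ^ 2.

Definition pick2_form (h : C -> C) (z w c0 c1 : C) : C :=
  hform2 (pick_kernel h z z) (pick_kernel h z w) (pick_kernel h w z) (pick_kernel h w w) c0 c1.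

Lemma pick2_form_nonneg_schwarz_pick h z w :
  Cmod z < 1 -> Cmod w < 1 ->
  (forall c0 c1, 0 <= Re (pick2_form h z w c0 c1)) ->
  Cmod (h z) <= 1 /\ Cmod (h w) <= 1 /\ schwarz_pick_ineq (h z) (h w) z w.
Proof.
  intros Hz Hw H. unfold pick2_form in H.
  rewrite <- (pick_kernel_conj h z w) in H.
  destruct (hform2_nonneg_minor _ _ _ H) as [HA [HC HD]].
  rewrite (pick_kernel_diag h z) in HA, HD by auto.
  rewrite (pick_kernel_diag h w) in HC, HD by auto. rewrite !re_RtoC in HA, HC, HD.
  unfold pick_kernel at 1 in HD. rewrite Cmod_div in HD by solve_neq0.
  assert (Y : 0 < Cmod (1 - z * Cconj w)) by (apply Cmod_gt_0; solve_neq0).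
  pose proof (Cmod_one_sub_mul_conj (h z) (h w)) as Eh.
  pose proof (Cmod_one_sub_mul_conj z w) as Ez.
  unfold schwarz_pick_ineq.
  set (ns := Cmod (h z)) in *. set (nt := Cmod (h w)) in *.
  set (nz := Cmod z) in *. set (nw := Cmod w) in *.
  set (X := Cmod (1 - h z * Cconj (h w))) in *.
  set (Yv := Cmod (1 - z * Cconj w)) in *.
  assert (0 <= ns) by apply Cmod_ge_0. assert (0 <= nt) by apply Cmod_ge_0.
  assert (0 <= nz) by apply Cmod_ge_0. assert (0 <= nw) by apply Cmod_ge_0.
  assert (Dz : 0 < 1 - nz ^ 2) by nra. assert (Dw : 0 < 1 - nw ^ 2) by nra.
  assert (Hs : 0 <= 1 - ns ^ 2).
  { apply Rmult_le_reg_r with (/ (1 - nz ^ 2)); [apply Rinv_0_lt_compat|]; lra. }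
  assert (Ht : 0 <= 1 - nt ^ 2).
  { apply Rmult_le_reg_r with (/ (1 - nw ^ 2)); [apply Rinv_0_lt_compat|]; lra. }
  repeat split; try nra.
  (* The minor inequality cleared of denominators; [Eh] and [Ez] turn it into Schwarz-Pick. *)
  assert (X ^ 2 * ((1 - nz ^ 2) * (1 - nw ^ 2)) <= ((1 - ns ^ 2) * (1 - nt ^ 2)) * Yv ^ 2).
  { replace (X ^ 2 * ((1 - nz ^ 2) * (1 - nw ^ 2)))
      with ((X / Yv) ^ 2 * (Yv ^ 2 * ((1 - nz ^ 2) * (1 - nw ^ 2)))) by (field; lra).
    replace (((1 - ns ^ 2) * (1 - nt ^ 2)) * Yv ^ 2)
      with ((1 - ns ^ 2) / (1 - nz ^ 2) * ((1 - nt ^ 2) / (1 - nw ^ 2))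
            * (Yv ^ 2 * ((1 - nz ^ 2) * (1 - nw ^ 2)))) by (field; lra).
    apply Rmult_le_compat_r; [|exact HD].
    apply Rmult_le_pos; [nra|]. apply Rmult_le_pos; lra. }
  nra.
Qed.

(** * Pick positivity on sets dense in the disk *)

Definition pick3_nonneg (h : C -> C) (E : C -> Prop) : Prop :=
  forall z : nat -> C, (forall i, (i < 3)%nat -> E (z i)) ->
    (forall i j, (i < 3)%nat -> (j < 3)%nat -> i <> j -> z i <> z j) ->
    forall c, 0 <= Re (pick_form 3 h z c).

Definition pick2_nonneg (h : C -> C) (E : C -> Prop) : Prop :=
  forall z w, E z -> E w -> z <> w -> forall c0 c1, 0 <= Re (pick2_form h z w c0 c1).

Definition dense_disk (E : C -> Prop) : Prop :=
  forall p, Cmod p < 1 -> forall d, 0 < d -> exists x, E x /\ Cmod (x - p) < d.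

Definition pts3 (a b c : C) : nat -> C :=
  fun i => match i with 0%nat => a | 1%nat => b | _ => c end.

Lemma pts3_in (E : C -> Prop) a b c :
  E a -> E b -> E c -> forall i, (i < 3)%nat -> E (pts3 a b c i).
Proof. intros Ha Hb Hc i Hi. destruct i as [|[|[|i]]]; simpl; auto; lia. Qed.

Lemma pts3_distinct a b c : a <> b -> a <> c -> b <> c ->
  forall i j, (i < 3)%nat -> (j < 3)%nat -> i <> j -> pts3 a b c i <> pts3 a b c j.
Proof.
  intros Hab Hac Hbc i j Hi Hj Hij.
  destruct i as [|[|[|i]]]; destruct j as [|[|[|j]]]; simpl; try lia; auto.
Qed.

Lemma exists_disk_avoid2 (z w : C) : exists p, Cmod p < 1 /\ p <> z /\ p <> w.
Proof.
  assert (Ht : exists t, 0 <= t <= 1 / 2 /\ t <> Re z /\ t <> Re w).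
  { destruct (Req_dec (Re z) 0), (Req_dec (Re w) 0), (Req_dec (Re z) (1 / 4)),
      (Req_dec (Re w) (1 / 4));
      first [exists 0; lra | exists (1 / 4); lra | exists (1 / 2); lra]. }
  destruct Ht as [t [Ht [Htz Htw]]].
  exists (RtoC t). rewrite Cmod_RtoC_nonneg by lra.
  split; [lra|]. split; intros E; subst; [apply Htz | apply Htw]; reflexivity.
Qed.

Lemma dense_disk_avoid2 E : dense_disk E -> forall z w, exists x, E x /\ x <> z /\ x <> w.
Proof.
  intros HE z w.
  destruct (exists_disk_avoid2 z w) as [p [Hp [Hpz Hpw]]].
  assert (Hz : 0 < Cmod (p - z)) by (apply Cmod_gt_0, Cminus_neq0, Hpz).
  assert (Hw : 0 < Cmod (p - w)) by (apply Cmod_gt_0, Cminus_neq0, Hpw).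
  destruct (HE p Hp (Rmin (Cmod (p - z)) (Cmod (p - w)))) as [x [Ex Hx]];
    [apply Rmin_pos; auto|].
  pose proof (Rmin_l (Cmod (p - z)) (Cmod (p - w))).
  pose proof (Rmin_r (Cmod (p - z)) (Cmod (p - w))).
  exists x. repeat split; auto; intros ->; rewrite Cmod_sub_sym in Hx; lra.
Qed.

Lemma pick3_nonneg_pick2 h E : dense_disk E -> pick3_nonneg h E -> pick2_nonneg h E.
Proof.
  intros Hd HR z w Hz Hw Hzw c0 c1.
  destruct (dense_disk_avoid2 E Hd z w) as [x [Hx [Hxz Hxw]]].
  assert (H := HR (pts3 z w x) (pts3_in E z w x Hz Hw Hx)
                  (pts3_distinct z w x Hzw (not_eq_sym Hxz) (not_eq_sym Hxw)) (pts3 c0 c1 0)).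
  rewrite pick_form3_expand in H. cbv beta iota delta [pts3] in H. rewrite Cconj_RtoC in H.
  unfold pick2_form, hform2.
  replace (Cconj c0 * pick_kernel h z z * c0 + Cconj c0 * pick_kernel h z w * c1
           + Cconj c1 * pick_kernel h w z * c0 + Cconj c1 * pick_kernel h w w * c1)%C
    with (Cconj c0 * pick_kernel h z z * c0 + Cconj c0 * pick_kernel h z w * c1
          + Cconj c0 * pick_kernel h z x * 0
          + (Cconj c1 * pick_kernel h w z * c0 + Cconj c1 * pick_kernel h w w * c1
             + Cconj c1 * pick_kernel h w x * 0)
          + (0 * pick_kernel h x z * c0 + 0 * pick_kernel h x w * c1 + 0 * pick_kernel h x x * 0))%C
    by ring.
  exact H.
Qed.

Lemma pick2_nonneg_schwarz_pick h E :
  (forall x, E x -> Cmod x < 1) -> dense_disk E -> pick2_nonneg h E ->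
  (forall z, E z -> Cmod (h z) <= 1) /\
  (forall z w, E z -> E w -> schwarz_pick_ineq (h z) (h w) z w).
Proof.
  intros Hsub Hd HP. split.
  - intros z Hz. destruct (dense_disk_avoid2 E Hd z z) as [w [Hw [Hwz _]]].
    apply (pick2_form_nonneg_schwarz_pick h z w (Hsub z Hz) (Hsub w Hw)).
    apply HP; auto.
  - intros z w Hz Hw. destruct (classic (z = w)) as [<-|Hzw].
    + unfold schwarz_pick_ineq. rewrite !Cmod_sub_diag. nra.
    + apply (pick2_form_nonneg_schwarz_pick h z w (Hsub z Hz) (Hsub w Hw)). apply HP; auto.
Qed.

(** * Local Lipschitz bounds and limits *)

Lemma schwarz_pick_lipschitz (s t z w : C) (r : R) :
  Cmod z <= r -> Cmod w <= r -> r < 1 -> Cmod s <= 1 -> Cmod t <= 1 ->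
  schwarz_pick_ineq s t z w -> Cmod (s - t) * (1 - r) <= 2 * Cmod (z - w).
Proof.
  intros Hz Hw Hr Hs Ht HL. unfold schwarz_pick_ineq in HL.
  assert (Hnum : Cmod (1 - s * Cconj t) <= 2).
  { pose proof (Cmod_sub_le 1 (s * Cconj t)) as H.
    rewrite Cmod_mult, Cmod_conj, Cmod_1 in H.
    pose proof (Cmod_ge_0 s). pose proof (Cmod_ge_0 t). nra. }
  assert (Hden : 1 - r <= Cmod (1 - z * Cconj w)).
  { pose proof (Cmod_sub_ge 1 (z * Cconj w)) as H.
    rewrite Cmod_mult, Cmod_conj, Cmod_1 in H.
    pose proof (Cmod_ge_0 z). pose proof (Cmod_ge_0 w). nra. }
  pose proof (Cmod_ge_0 (s - t)). pose proof (Cmod_ge_0 (z - w)).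
  pose proof (Cmod_ge_0 (1 - s * Cconj t)). pose proof (Cmod_ge_0 z).
  assert ((Cmod (s - t) * (1 - r)) ^ 2 <= (2 * Cmod (z - w)) ^ 2).
  { apply Rle_trans with (Cmod (s - t) ^ 2 * Cmod (1 - z * Cconj w) ^ 2).
    - rewrite Rpow_mult_distr. apply Rmult_le_compat_l; nra.
    - apply Rle_trans with (1 := HL). rewrite Rpow_mult_distr.
      apply Rmult_le_compat_r; nra. }
  nra.
Qed.

Definition lipschitz_near (h : C -> C) (E : C -> Prop) (p : C) : Prop :=
  exists d M, 0 < d /\ 0 <= M /\
    forall x y, E x -> E y -> Cmod (x - p) < d -> Cmod (y - p) < d ->
      Cmod (h x - h y) <= M * Cmod (x - y).

Lemma schwarz_pick_lipschitz_near (h : C -> C) (E : C -> Prop) :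
  (forall x, E x -> Cmod x < 1) ->
  (forall z, E z -> Cmod (h z) <= 1) ->
  (forall z w, E z -> E w -> schwarz_pick_ineq (h z) (h w) z w) ->
  forall p, Cmod p < 1 -> lipschitz_near h E p.
Proof.
  intros Hsub Hb HL p Hp. pose proof (Cmod_ge_0 p).
  set (r := (1 + Cmod p) / 2).
  exists ((1 - Cmod p) / 2), (2 / (1 - r)).
  split; [lra|]. split; [apply Rdiv_le_0_compat; unfold r; lra|].
  intros x y Ex Ey Hx Hy.
  assert (Hxr : Cmod x <= r) by (pose proof (Cmod_sub_ge x p); unfold r; lra).
  assert (Hyr : Cmod y <= r) by (pose proof (Cmod_sub_ge y p); unfold r; lra).
  assert (Hr : r < 1) by (unfold r; lra).
  pose proof (schwarz_pick_lipschitz (h x) (h y) x y r Hxr Hyr Hr (Hb x Ex) (Hb y Ey)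
                (HL x y Ex Ey)).
  apply Rmult_le_reg_r with (1 - r); [lra|].
  replace (2 / (1 - r) * Cmod (x - y) * (1 - r)) with (2 * Cmod (x - y)) by (field; lra).
  assumption.
Qed.

Definition Clim {T} (F : (T -> Prop) -> Prop) (u : T -> C) (l : C) : Prop :=
  forall eps, 0 < eps -> F (fun t => Cmod (u t - l) < eps).

Lemma Clim_filterlim {T} (F : (T -> Prop) -> Prop) {FF : Filter F} u l :
  Clim F u l <-> filterlim u F (locally l).
Proof.
  split; intros H.
  - apply (filterlim_locally_ball_norm (K := C_AbsRing) (U := C_NormedModule)).
    intros eps. apply (H eps (cond_pos eps)).
  - intros eps Heps.
    exact (proj1 (filterlim_locally_ball_norm (K := C_AbsRing) (U := C_NormedModule) _ _) H
             (mkposreal eps Heps)).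
Qed.

Lemma locally_Cmod (p : C) (r : R) : 0 < r -> locally p (fun y => Cmod (y - p) < r).
Proof.
  intros Hr. exact (locally_ball_norm (K := C_AbsRing) (V := C_NormedModule) p (mkposreal r Hr)).
Qed.

Lemma locally_Cmod_inv (p : C) (Q : C -> Prop) :
  locally p Q -> exists r, 0 < r /\ forall y, Cmod (y - p) < r -> Q y.
Proof.
  intros [eps H]. exists eps. split; [apply cond_pos|].
  intros y Hy. apply H, (norm_compat1 (K := C_AbsRing) (V := C_NormedModule)), Hy.
Qed.

Section ClimAlgebra.
Context {T : Type} (F : (T -> Prop) -> Prop) {FF : Filter F}.

Lemma Clim_const (a : C) : Clim F (fun _ => a) a.
Proof.
  intros eps Heps. apply filter_forall. intros. rewrite Cmod_sub_diag. lra.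
Qed.

Lemma Clim_add u v a b : Clim F u a -> Clim F v b -> Clim F (fun t => u t + v t)%C (a + b)%C.
Proof.
  intros Hu Hv. apply Clim_filterlim; auto.
  apply Clim_filterlim in Hu; apply Clim_filterlim in Hv; auto.
  exact (filterlim_comp_2 u v Cplus Hu Hv
           (filterlim_plus (K := C_AbsRing) (V := C_NormedModule) a b)).
Qed.

Lemma Clim_opp u a : Clim F u a -> Clim F (fun t => - u t)%C (- a)%C.
Proof.
  intros Hu eps He. apply filter_imp with (2 := Hu eps He). intros t H.
  replace (- u t - - a)%C with (- (u t - a))%C by ring. rewrite Cmod_opp. auto.
Qed.

Lemma Clim_sub u v a b : Clim F u a -> Clim F v b -> Clim F (fun t => u t - v t)%C (a - b)%C.
Proof. intros Hu Hv. apply Clim_add; [|apply Clim_opp]; auto. Qed.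

Lemma Clim_conj u a : Clim F u a -> Clim F (fun t => Cconj (u t)) (Cconj a).
Proof.
  intros Hu eps Heps. apply filter_imp with (2 := Hu eps Heps).
  intros t H. rewrite <- Cminus_conj, Cmod_conj. exact H.
Qed.

Lemma Clim_mul u v a b : Clim F u a -> Clim F v b -> Clim F (fun t => u t * v t)%C (a * b)%C.
Proof.
  intros Hu Hv eps Heps.
  pose proof (Cmod_ge_0 a). pose proof (Cmod_ge_0 b).
  set (d := Rmin 1 (eps / (Cmod a + Cmod b + 1))).
  assert (Hd : 0 < d) by (apply Rmin_pos; [lra | apply Rdiv_lt_0_compat; lra]).
  apply filter_imp with (2 := filter_and _ _ (Hu d Hd) (Hv d Hd)).
  intros t [Hut Hvt].
  assert (d <= 1) by apply Rmin_l.
  assert (d <= eps / (Cmod a + Cmod b + 1)) by apply Rmin_r.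
  assert (Cmod (u t) <= Cmod a + 1) by (pose proof (Cmod_sub_ge (u t) a); lra).
  replace (u t * v t - a * b)%C with (u t * (v t - b) + b * (u t - a))%C by ring.
  eapply Rle_lt_trans; [apply Cmod_triangle|]. rewrite !Cmod_mult.
  pose proof (Cmod_ge_0 (u t)). pose proof (Cmod_ge_0 (v t - b)).
  pose proof (Cmod_ge_0 (u t - a)).
  assert ((Cmod a + Cmod b + 1) * d <= eps).
  { apply Rle_trans with ((Cmod a + Cmod b + 1) * (eps / (Cmod a + Cmod b + 1))).
    - apply Rmult_le_compat_l; lra.
    - right; field; lra. }
  nra.
Qed.

Lemma Clim_inv u (a : C) : a <> 0 -> Clim F u a -> Clim F (fun t => / u t)%C (/ a)%C.
Proof.
  intros Ha Hu eps Heps.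
  assert (Hm : 0 < Cmod a) by (apply Cmod_gt_0; auto).
  set (d := Rmin (Cmod a / 2) (eps * Cmod a ^ 2 / 2)).
  assert (0 < Cmod a ^ 2) by nra.
  assert (Hd : 0 < d)
    by (apply Rmin_pos; [|apply Rdiv_lt_0_compat; [apply Rmult_lt_0_compat|]]; lra).
  apply filter_imp with (2 := Hu d Hd).
  intros t Ht.
  assert (d <= Cmod a / 2) by apply Rmin_l.
  assert (d <= eps * Cmod a ^ 2 / 2) by apply Rmin_r.
  assert (Hut : Cmod a / 2 <= Cmod (u t))
    by (pose proof (Cmod_sub_ge a (u t)) as Hrev; rewrite Cmod_sub_sym in Hrev; lra).
  assert (Hnz : u t <> 0) by (intro E; rewrite E, Cmod_0 in Hut; lra).
  replace (/ u t - / a)%C with ((a - u t) / (u t * a))%C by (field; auto).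
  rewrite Cmod_div, Cmod_mult, Cmod_sub_sym by (apply Cmult_neq_0; auto).
  apply Rmult_lt_reg_r with (Cmod (u t) * Cmod a); [nra|].
  unfold Rdiv. rewrite Rmult_assoc, Rinv_l, Rmult_1_r by nra.
  nra.
Qed.

Lemma Clim_div u v (a b : C) :
  b <> 0 -> Clim F u a -> Clim F v b -> Clim F (fun t => u t / v t)%C (a / b)%C.
Proof. intros Hb Hu Hv. apply Clim_mul, Clim_inv; auto. Qed.

Lemma Clim_neq u v a b : Clim F u a -> Clim F v b -> a <> b -> F (fun t => u t <> v t).
Proof.
  intros Hu Hv Hab.
  assert (Hp : 0 < Cmod (a - b) / 2)
    by (pose proof (proj1 (Cmod_gt_0 _) (Cminus_neq0 a b Hab)); lra).
  apply filter_imp with (2 := filter_and _ _ (Hu _ Hp) (Hv _ Hp)).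
  intros t [H1 H2] E. rewrite E in H1.
  pose proof (Cmod_sub_le (v t - b) (v t - a)).
  replace (v t - b - (v t - a))%C with (a - b)%C in * by ring.
  lra.
Qed.

End ClimAlgebra.

Ltac Clim_auto :=
  repeat first [ assumption | exact _ | solve_neq0
               | apply Clim_const | apply Clim_sub | apply Clim_add | apply Clim_opp
               | apply Clim_div | apply Clim_mul | apply Clim_conj ].

Lemma Clim_comp {T U} (F : (T -> Prop) -> Prop) (G : (U -> Prop) -> Prop) g u l :
  filterlim g F G -> Clim G u l -> Clim F (fun t => u (g t)) l.
Proof. intros Hg Hu eps Heps. exact (Hg _ (Hu eps Heps)). Qed.

Lemma Clim_within_subset (E E' : C -> Prop) (p : C) u l :
  (forall x, E' x -> E x) -> Clim (within E (locally p)) u l -> Clim (within E' (locally p)) u l.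
Proof.
  intros HE Hu eps Heps.
  exact (filter_imp _ _ (fun x Hx Ex => Hx (HE x Ex)) (Hu eps Heps)).
Qed.

Lemma Clim_id_within (E : C -> Prop) (p : C) : Clim (within E (locally p)) (fun x => x) p.
Proof. intros eps Heps. apply filter_imp with (2 := locally_Cmod p eps Heps). auto. Qed.

Lemma Clim_Re_nonneg {T} (F : (T -> Prop) -> Prop) {FF : ProperFilter F} u l :
  F (fun t => 0 <= Re (u t)) -> Clim F u l -> 0 <= Re l.
Proof.
  intros Hpos Hu. destruct (Rle_or_lt 0 (Re l)) as [|Hl]; auto.
  destruct (filter_ex _ (filter_and _ _ Hpos (Hu (- Re l) ltac:(lra)))) as [t [Ht Hut]].
  pose proof (re_le_Cmod (u t - l)) as Hre.
  replace (Re (u t - l)) with (Re (u t) - Re l) in Hre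
    by (destruct (u t), l; unfold Re, Cminus, Cplus, Copp; simpl; ring).
  apply Rabs_le_between in Hre. lra.
Qed.

Lemma Clim_unique {T} (F : (T -> Prop) -> Prop) {FF : ProperFilter F} u a b :
  Clim F u a -> Clim F u b -> a = b.
Proof.
  intros Ha Hb. apply NNPP. intros Hab.
  destruct (filter_ex _ (Clim_neq F u u a b Ha Hb Hab)) as [t Ht]. auto.
Qed.

Lemma within_dense_proper (E : C -> Prop) (p : C) :
  dense_disk E -> Cmod p < 1 -> ProperFilter (within E (locally p)).
Proof.
  intros Hd Hp. constructor; [|exact _].
  intros P HP. destruct (locally_Cmod_inv _ _ HP) as [r [Hr HPr]].
  destruct (Hd p Hp r Hr) as [x [Ex Hx]]. exists x. auto.
Qed.

Lemma lipschitz_near_has_limit (h : C -> C) (E : C -> Prop) (p : C) :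
  dense_disk E -> Cmod p < 1 -> lipschitz_near h E p ->
  exists L, Clim (within E (locally p)) h L.
Proof.
  intros Hd Hp [d [M [Hd0 [HM HL]]]].
  pose proof (within_dense_proper E p Hd Hp) as PF.
  destruct (proj1 (filterlim_locally_cauchy (U := C_CompleteNormedModule)
                     (F := within E (locally p)) h)) as [L HLim].
  - intros eps. pose proof (cond_pos eps).
    set (eta := Rmin d (eps / (2 * M + 1))).
    assert (Heta : 0 < eta) by (apply Rmin_pos; auto; apply Rdiv_lt_0_compat; lra).
    assert (eta <= d) by apply Rmin_l. assert (eta <= eps / (2 * M + 1)) by apply Rmin_r.
    exists (fun x => E x /\ Cmod (x - p) < eta). split.
    + apply filter_imp with (2 := locally_Cmod p eta Heta). auto.
    + intros u v [Eu Hu] [Ev Hv].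
      apply (norm_compat1 (K := C_AbsRing) (V := C_NormedModule)).
      change (Cmod (h v - h u) < eps). rewrite Cmod_sub_sym.
      eapply Rle_lt_trans; [apply HL; auto; lra|].
      assert (Cmod (u - v) < 2 * eta).
      { replace (u - v)%C with ((u - p) - (v - p))%C by ring.
        eapply Rle_lt_trans; [apply Cmod_sub_le | lra]. }
      assert (2 * M * eta <= 2 * M * (eps / (2 * M + 1))) by (apply Rmult_le_compat_l; lra).
      assert (2 * M * (eps / (2 * M + 1)) < eps)
        by (apply Rmult_lt_reg_r with (2 * M + 1); [lra|]; field_simplify; lra).
      pose proof (Cmod_ge_0 (u - v)). nra.
  - exists L. apply Clim_filterlim; [exact _ | exact HLim].
Qed.

Lemma lipschitz_near_continuous (h : C -> C) (E : C -> Prop) (p : C) :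
  E p -> lipschitz_near h E p -> Clim (within E (locally p)) h (h p).
Proof.
  intros Ep [d [M [Hd [HM HL]]]] eps Heps.
  set (eta := Rmin d (eps / (M + 1))).
  assert (Heta : 0 < eta) by (apply Rmin_pos; auto; apply Rdiv_lt_0_compat; lra).
  assert (eta <= d) by apply Rmin_l. assert (eta <= eps / (M + 1)) by apply Rmin_r.
  apply filter_imp with (2 := locally_Cmod p eta Heta).
  intros x Hx Ex.
  eapply Rle_lt_trans; [apply HL; auto; try lra; rewrite Cmod_sub_diag; lra|].
  assert (M * eta <= M * (eps / (M + 1))) by (apply Rmult_le_compat_l; lra).
  assert (M * (eps / (M + 1)) < eps)
    by (apply Rmult_lt_reg_r with (M + 1); [lra|]; field_simplify; lra).
  pose proof (Cmod_ge_0 (x - p)). nra.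
Qed.

(** * Extension to the disk *)

Lemma ProperFilter_prod {T U} (F : (T -> Prop) -> Prop) (G : (U -> Prop) -> Prop) :
  ProperFilter F -> ProperFilter G -> ProperFilter (filter_prod F G).
Proof.
  intros PF PG. constructor; [|exact _].
  intros P [Q R HQ HR HP].
  destruct (filter_ex _ HQ) as [x Hx], (filter_ex _ HR) as [y Hy].
  exists (x, y). auto.
Qed.

Lemma Clim_pick_kernel {T} (F : (T -> Prop) -> Prop) {FF : Filter F}
    (f S : C -> C) (x y : T -> C) (a b : C) :
  (1 - a * Cconj b)%C <> 0 ->
  Clim F x a -> Clim F y b -> Clim F (fun t => f (x t)) (S a) -> Clim F (fun t => f (y t)) (S b) ->
  Clim F (fun t => pick_kernel f (x t) (y t)) (pick_kernel S a b).
Proof.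
  intros Hab Hx Hy Hfx Hfy. unfold pick_kernel.
  Clim_auto.
Qed.

Lemma Clim_pick_form3 {T} (F : (T -> Prop) -> Prop) {FF : Filter F}
    (f S : C -> C) (x : T -> nat -> C) (z c : nat -> C) :
  (forall i, (i < 3)%nat -> Cmod (z i) < 1) ->
  (forall i, (i < 3)%nat -> Clim F (fun t => x t i) (z i)) ->
  (forall i, (i < 3)%nat -> Clim F (fun t => f (x t i)) (S (z i))) ->
  Clim F (fun t => pick_form 3 f (x t) c) (pick_form 3 S z c).
Proof.
  intros Hz Hx Hfx.
  assert (Hnz : forall i j, (i < 3)%nat -> (j < 3)%nat -> (1 - z i * Cconj (z j))%C <> 0)
    by (intros i j Hi Hj; apply one_sub_mul_conj_neq0; [|apply Rlt_le]; auto).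
  rewrite (functional_extensionality _ _ (fun t => pick_form3_expand f (x t) c)),
    pick_form3_expand.
  repeat first [ exact FF
               | apply (Clim_pick_kernel F (FF := FF));
                   [apply Hnz | apply Hx | apply Hx | apply Hfx | apply Hfx]; lia
               | apply Clim_add | apply Clim_mul | apply Clim_conj | apply Clim_const ].
Qed.

(* The limit is taken along the product of the filters [within E (locally (z i))]. *)
Lemma pick3_nonneg_closure (f S : C -> C) (E : C -> Prop) :
  dense_disk E -> pick3_nonneg f E ->
  (forall p, Cmod p < 1 -> Clim (within E (locally p)) f (S p)) ->
  pick3_nonneg S unit_disk.
Proof.
  intros Hd Hf HS z Hz Hdist c.
  set (F := filter_prod (within E (locally (z 0%nat)))
              (filter_prod (within E (locally (z 1%nat))) (within E (locally (z 2%nat))))).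
  set (x := fun t : C * (C * C) => pts3 (fst t) (fst (snd t)) (snd (snd t))).
  assert (PF : ProperFilter F)
    by (repeat apply ProperFilter_prod; apply within_dense_proper; auto; apply Hz; lia).
  assert (FF : Filter F) by apply PF.
  assert (Hproj : forall i, (i < 3)%nat ->
                   filterlim (fun t => x t i) F (within E (locally (z i)))).
  { intros [|[|[|i]]] Hi; simpl; try lia.
    - apply filterlim_fst.
    - exact (filterlim_comp _ _ _ snd fst _ _ _ filterlim_snd filterlim_fst).
    - exact (filterlim_comp _ _ _ snd snd _ _ _ filterlim_snd filterlim_snd). }
  assert (Hx : forall i, (i < 3)%nat -> Clim F (fun t => x t i) (z i))
    by (intros i Hi; exact (Clim_comp _ _ _ _ _ (Hproj i Hi) (Clim_id_within E (z i)))).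
  assert (HE : F (fun t => forall i, (i < 3)%nat -> E (x t i))).
  { assert (Hin : forall i, (i < 3)%nat -> F (fun t => E (x t i)))
      by (intros i Hi; apply (Hproj i Hi); unfold within; apply filter_forall; auto).
    apply filter_imp with
      (2 := filter_and (F := F) _ _ (Hin 0%nat ltac:(lia))
              (filter_and (F := F) _ _ (Hin 1%nat ltac:(lia)) (Hin 2%nat ltac:(lia)))).
    intros t [H0 [H1 H2]] [|[|[|i]]] Hi; auto; lia. }
  assert (Hsep : F (fun t => forall i j, (i < 3)%nat -> (j < 3)%nat -> i <> j ->
                                         x t i <> x t j)).
  { assert (Hneq : forall i j, (i < 3)%nat -> (j < 3)%nat -> i <> j ->
                               F (fun t => x t i <> x t j))
      by (intros i j Hi Hj Hij; apply (Clim_neq F _ _ (z i) (z j)); auto).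
    apply filter_imp with
      (2 := filter_and (F := F) _ _ (Hneq 0%nat 1%nat ltac:(lia) ltac:(lia) ltac:(lia))
              (filter_and (F := F) _ _ (Hneq 0%nat 2%nat ltac:(lia) ltac:(lia) ltac:(lia))
                 (Hneq 1%nat 2%nat ltac:(lia) ltac:(lia) ltac:(lia)))).
    intros t [H01 [H02 H12]] [|[|[|i]]] [|[|[|j]]] Hi Hj Hij; try lia; auto. }
  apply (Clim_Re_nonneg F (fun t => pick_form 3 f (x t) c)).
  - apply filter_imp with (2 := filter_and (F := F) _ _ HE Hsep).
    intros t [HEt Hsept]. apply Hf; auto.
  - apply Clim_pick_form3; auto.
    intros i Hi. exact (Clim_comp _ _ _ _ _ (Hproj i Hi) (HS (z i) (Hz i Hi))).
Qed.

Lemma pick3_nonneg_extension (f : C -> C) (E : C -> Prop) :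
  (forall x, E x -> Cmod x < 1) -> dense_disk E -> pick3_nonneg f E ->
  exists S : C -> C, pick3_nonneg S unit_disk /\ forall z, E z -> S z = f z.
Proof.
  intros Hsub Hd Hf.
  destruct (pick2_nonneg_schwarz_pick f E Hsub Hd (pick3_nonneg_pick2 f E Hd Hf)) as [Hb HL].
  pose proof (schwarz_pick_lipschitz_near f E Hsub Hb HL) as Hlip.
  destruct (functional_choice (fun p L => Cmod p < 1 -> Clim (within E (locally p)) f L))
    as [S HS].
  { intros p. destruct (classic (Cmod p < 1)) as [Hp|Hp].
    - destruct (lipschitz_near_has_limit f E p Hd Hp (Hlip p Hp)) as [L HLim]. eauto.
    - exists 0. tauto. }
  exists S. split; [exact (pick3_nonneg_closure f S E Hd Hf HS)|].
  intros z Ez. pose proof (Hsub z Ez) as Hz.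
  apply (Clim_unique (within E (locally z)) (FF := within_dense_proper E z Hd Hz) f); auto.
  apply lipschitz_near_continuous; auto.
Qed.

(** * Removing isolated sets *)

Definition isolated_in (Z D : C -> Prop) : Prop :=
  forall w, D w -> exists eps, 0 < eps /\ forall z, Z z -> 0 < Cmod (z - w) < eps -> False.

Lemma isolated_in_singleton (a : C) (D : C -> Prop) : isolated_in (fun z => z = a) D.
Proof.
  intros w _. destruct (classic (a = w)) as [<-|Haw].
  - exists 1. split; [lra|]. intros z -> H. rewrite Cmod_sub_diag in H. lra.
  - exists (Cmod (a - w)). split; [apply Cmod_gt_0, Cminus_neq0, Haw|].
    intros z -> H. lra.
Qed.

Lemma open_unit_disk : open unit_disk.
Proof.
  intros z Hz. unfold unit_disk in *.
  apply filter_imp with (2 := locally_Cmod z (1 - Cmod z) ltac:(lra)).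
  intros y Hy. pose proof (Cmod_sub_ge y z). lra.
Qed.

Lemma open_remove_isolated (D Z : C -> Prop) :
  open D -> isolated_in Z D -> open (fun z => D z /\ ~ Z z).
Proof.
  intros HD HZ z [Dz Zz].
  destruct (HZ z Dz) as [eps [Heps Hiso]].
  apply filter_imp with (2 := filter_and _ _ (HD z Dz) (locally_Cmod z eps Heps)).
  intros y [Dy Hy]. split; [exact Dy|]. intros Zy.
  destruct (classic (y = z)) as [->|Hyz]; [contradiction|].
  apply (Hiso y Zy). split; [apply Cmod_gt_0, Cminus_neq0|]; assumption.
Qed.

Lemma dense_remove_isolated (D Z : C -> Prop) :
  open D -> dense_disk D -> isolated_in Z D -> dense_disk (fun z => D z /\ ~ Z z).
Proof.
  intros HD Hdense HZ p Hp d Hd.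
  destruct (Hdense p Hp (d / 2)) as [x [Dx Hxp]]; [lra|].
  destruct (classic (Z x)) as [Zx|Zx]; [|exists x; split; [split|]; auto; lra].
  destruct (locally_Cmod_inv _ _ (HD x Dx)) as [r [Hr HDr]].
  destruct (HZ x Dx) as [eps [Heps Hiso]].
  set (m := Rmin r (Rmin eps (d / 2)) / 2).
  assert (Hm : 0 < m /\ m < r /\ m < eps /\ m < d / 2).
  { pose proof (Rmin_l r (Rmin eps (d / 2))). pose proof (Rmin_r r (Rmin eps (d / 2))).
    pose proof (Rmin_l eps (d / 2)). pose proof (Rmin_r eps (d / 2)).
    assert (0 < Rmin r (Rmin eps (d / 2))) by (repeat apply Rmin_pos; lra).
    unfold m. lra. }
  assert (Hc : Cmod (x + RtoC m - x) = m).
  { replace (x + RtoC m - x)%C with (RtoC m) by ring. apply Cmod_RtoC_nonneg. lra. }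
  exists (x + RtoC m)%C. split; [split|].
  - apply HDr. lra.
  - intros Zy. apply (Hiso _ Zy). lra.
  - replace (x + RtoC m - p)%C with ((x + RtoC m - x) + (x - p))%C by ring.
    eapply Rle_lt_trans; [apply Cmod_triangle | lra].
Qed.

Lemma dense_unit_disk : dense_disk unit_disk.
Proof. intros p Hp d Hd. exists p. rewrite Cmod_sub_diag. auto. Qed.

(** * Hindmarsh's theorem on the disk *)

Definition blaschke (a x : C) : C := ((x - a) / (1 - Cconj a * x))%C.

Definition schur_step (S : C -> C) (a x : C) : C := (blaschke (S a) (S x) / blaschke a x)%C.

Definition schur_factor (S : C -> C) (a x : C) : C :=
  (blaschke a x * (1 - Cconj (S a) * S x))%C.

Definition punctured_disk (a z : C) : Prop := unit_disk z /\ ~ z = a.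

Section SchurStep.
Variables (S : C -> C) (a : C).
Hypotheses (Ha : Cmod a < 1) (HSa : Cmod (S a) < 1).

Lemma schur_factor_neq0 x : Cmod x < 1 -> x <> a -> Cmod (S x) <= 1 -> schur_factor S a x <> 0.
Proof.
  intros Hx Hxa HSx. unfold schur_factor. apply Cmult_neq_0; [|solve_neq0].
  intros E. apply (Cminus_neq0 x a Hxa).
  replace (x - a)%C with (blaschke a x * (1 - Cconj a * x))%C
    by (unfold blaschke; field; solve_neq0).
  rewrite E. ring.
Qed.

Lemma pick_kernel_diag_neq0 : pick_kernel S a a <> 0.
Proof.
  rewrite pick_kernel_diag by exact Ha. intros E. apply RtoC_inj in E.
  pose proof (Cmod_ge_0 (S a)). pose proof (Cmod_ge_0 a).
  assert (0 < (1 - Cmod (S a) ^ 2) / (1 - Cmod a ^ 2)) by (apply Rdiv_lt_0_compat; nra).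
  lra.
Qed.

(* The Pick kernel of the Schur step is, up to the factor [1 - |S a|^2] and a rescaling,
   the Schur complement of the entry [K(a,a)] in the Pick matrix of [S] at [a, x, y]. *)
Lemma pick_kernel_schur_step x y :
  Cmod x < 1 -> Cmod y < 1 -> x <> a -> y <> a -> Cmod (S x) <= 1 -> Cmod (S y) <= 1 ->
  pick_kernel (schur_step S a) x y =
  ((1 - Cconj (S a) * S a)
   * (pick_kernel S x y - pick_kernel S x a * pick_kernel S a y / pick_kernel S a a)
   / (schur_factor S a x * Cconj (schur_factor S a y)))%C.
Proof.
  intros Hx Hy Hxa Hya HSx HSy.
  unfold pick_kernel, schur_step, schur_factor, blaschke. simpl_Cconj.
  field. repeat split; solve_neq0.
Qed.

Lemma pick2_form_schur_step z w d1 d2 :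
  Cmod z < 1 -> Cmod w < 1 -> z <> a -> w <> a -> Cmod (S z) <= 1 -> Cmod (S w) <= 1 ->
  exists c : nat -> C,
    pick2_form (schur_step S a) z w d1 d2
    = ((1 - Cconj (S a) * S a) * pick_form 3 S (pts3 a z w) c)%C.
Proof.
  intros Hz Hw Hza Hwa HSz HSw.
  set (c1 := (d1 / Cconj (schur_factor S a z))%C).
  set (c2 := (d2 / Cconj (schur_factor S a w))%C).
  set (c0 := (- (pick_kernel S a z * c1 + pick_kernel S a w * c2) / pick_kernel S a a)%C).
  exists (pts3 c0 c1 c2).
  rewrite pick_form3_expand. cbv beta iota delta [pts3]. unfold pick2_form, hform2.
  rewrite !pick_kernel_schur_step by auto.
  assert (Hc0 : Cconj c0 = (- (pick_kernel S z a * Cconj c1 + pick_kernel S w a * Cconj c2)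
                            / pick_kernel S a a)%C)
    by (unfold c0; simpl_Cconj; rewrite !pick_kernel_conj; reflexivity).
  assert (Hc1 : Cconj c1 = (Cconj d1 / schur_factor S a z)%C)
    by (unfold c1; simpl_Cconj; reflexivity).
  assert (Hc2 : Cconj c2 = (Cconj d2 / schur_factor S a w)%C)
    by (unfold c2; simpl_Cconj; reflexivity).
  rewrite Hc0, Hc1, Hc2. unfold c0, c1, c2.
  pose proof (schur_factor_neq0 z Hz Hza HSz). pose proof (schur_factor_neq0 w Hw Hwa HSw).
  pose proof pick_kernel_diag_neq0.
  field. repeat split; auto using Cconj_neq0.
Qed.

End SchurStep.

Lemma dense_punctured_disk a : dense_disk (punctured_disk a).
Proof.
  exact (dense_remove_isolated unit_disk (fun z => z = a) open_unit_disk dense_unit_disk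
           (isolated_in_singleton a unit_disk)).
Qed.

Lemma schur_step_pick2_nonneg S a :
  Cmod a < 1 -> Cmod (S a) < 1 -> (forall z, Cmod z < 1 -> Cmod (S z) <= 1) ->
  pick3_nonneg S unit_disk -> pick2_nonneg (schur_step S a) (punctured_disk a).
Proof.
  intros Ha HSa Hb HS z w [Hz Hza] [Hw Hwa] Hzw c0 c1.
  destruct (pick2_form_schur_step S a Ha HSa z w c0 c1 Hz Hw Hza Hwa (Hb z Hz) (Hb w Hw))
    as [c ->].
  replace (Re ((1 - Cconj (S a) * S a) * pick_form 3 S (pts3 a z w) c))
    with ((1 - Cmod (S a) ^ 2) * Re (pick_form 3 S (pts3 a z w) c))
    by (rewrite Cmod_sqr; destruct (S a), (pick_form 3 S (pts3 a z w) c); unfold Re; simpl; ring).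
  apply Rmult_le_pos; [pose proof (Cmod_ge_0 (S a)); nra|].
  apply HS; [apply pts3_in; auto; exact Ha | apply pts3_distinct; auto].
Qed.

Lemma is_derive_difference_quotient (S q : C -> C) (a l : C) : Cmod a < 1 ->
  (forall z, punctured_disk a z -> (S z - S a)%C = ((z - a) * q z)%C) ->
  Clim (within (punctured_disk a) (locally a)) q l ->
  is_derive S a l.
Proof.
  intros Ha Hid Hq. split; [apply is_linear_scal_l|].
  intros x Hx.
  apply (is_filter_lim_locally_unique (K := C_AbsRing) (V := AbsRing_NormedModule C_AbsRing))
    in Hx. subst x.
  intros eps.
  destruct (locally_Cmod_inv _ _ (Hq eps (cond_pos eps))) as [r [Hr Hrr]].
  exists (mkposreal _ (Rmin_pos r (1 - Cmod a) Hr ltac:(lra))). simpl. intros y Hy.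
  change (Cmod (y - a) < Rmin r (1 - Cmod a)) in Hy.
  change (Cmod (S y - S a - (y - a) * l)%C <= eps * Cmod (y - a)).
  pose proof (Rmin_l r (1 - Cmod a)). pose proof (Rmin_r r (1 - Cmod a)).
  destruct (classic (y = a)) as [->|Hya].
  - rewrite !Cmod_sub_diag.
    replace (S a - S a - (a - a) * l)%C with (RtoC 0) by ring. rewrite Cmod_0. lra.
  - assert (Hy1 : unit_disk y) by (pose proof (Cmod_sub_ge y a); unfold unit_disk; lra).
    rewrite Hid by (split; auto).
    replace ((y - a) * q y - (y - a) * l)%C with ((y - a) * (q y - l))%C by ring.
    rewrite Cmod_mult.
    assert (Cmod (q y - l) < eps) by (apply Hrr; [lra | split; auto]).
    pose proof (Cmod_ge_0 (y - a)). nra.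
Qed.

Lemma schwarz_pick_unimodular_const (S : C -> C) (a : C) :
  Cmod a < 1 -> Cmod (S a) = 1 ->
  (forall z, Cmod z < 1 -> schwarz_pick_ineq (S a) (S z) a z) ->
  forall z, Cmod z < 1 -> S z = S a.
Proof.
  intros Ha HSa HL z Hz. specialize (HL z Hz). unfold schwarz_pick_ineq in HL.
  (* With [|S a| = 1] this becomes [|S a - S z|^2 (1 - |a|^2) (1 - |z|^2) <= 0]. *)
  rewrite (Cmod_one_sub_mul_conj (S a) (S z)), (Cmod_one_sub_mul_conj a z), HSa in HL.
  pose proof (Cmod_ge_0 a). pose proof (Cmod_ge_0 z). pose proof (Cmod_ge_0 (S a - S z)).
  assert (P : 0 < (1 - Cmod a ^ 2) * (1 - Cmod z ^ 2)) by (apply Rmult_lt_0_compat; nra).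
  assert (Cmod (S a - S z) ^ 2 * ((1 - Cmod a ^ 2) * (1 - Cmod z ^ 2)) <= 0) by nra.
  assert (Cmod (S a - S z) ^ 2 <= 0) by (apply Rmult_le_reg_r with (1 := P); lra).
  assert (Cmod (S a - S z) = 0) by nra.
  symmetry. apply Ceq_minus, Cmod_eq_0. assumption.
Qed.

Theorem pick3_nonneg_ex_derive (S : C -> C) :
  pick3_nonneg S unit_disk -> forall a, Cmod a < 1 -> ex_derive S a.
Proof.
  intros HS a Ha.
  destruct (pick2_nonneg_schwarz_pick S unit_disk (fun x H => H) dense_unit_disk
              (pick3_nonneg_pick2 S unit_disk dense_unit_disk HS)) as [Hb HL].
  destruct (Rle_lt_or_eq_dec _ _ (Hb a Ha)) as [HSa|HSa].
  2:{ exists zero. apply is_derive_ext_loc with (fun _ => S a); [|apply is_derive_const].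
      exists (mkposreal (1 - Cmod a) ltac:(lra)). intros y Hy.
      change (Cmod (y - a) < 1 - Cmod a) in Hy.
      symmetry. apply (schwarz_pick_unimodular_const S a Ha HSa); auto.
      pose proof (Cmod_sub_ge y a). lra. }
  set (g := schur_step S a).
  destruct (pick2_nonneg_schwarz_pick g (punctured_disk a) (fun x H => proj1 H)
              (dense_punctured_disk a) (schur_step_pick2_nonneg S a Ha HSa Hb HS))
    as [Hbg HLg].
  destruct (lipschitz_near_has_limit g (punctured_disk a) a (dense_punctured_disk a) Ha
              (schwarz_pick_lipschitz_near g _ (fun x H => proj1 H) Hbg HLg a Ha)) as [L HgL].
  assert (HSc : Clim (within (punctured_disk a) (locally a)) S (S a)).
  { apply Clim_within_subset with unit_disk; [intros x Hx; apply Hx|].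
    apply lipschitz_near_continuous; [exact Ha|].
    exact (schwarz_pick_lipschitz_near S unit_disk (fun x H => H) Hb HL a Ha). }
  (* [S z - S a = (z - a) q z], with [q] expressed through the Schur step [g] *)
  set (q := fun z => (g z * (1 - Cconj (S a) * S z) / (1 - Cconj a * z))%C).
  exists (L * (1 - Cconj (S a) * S a) / (1 - Cconj a * a))%C.
  apply (is_derive_difference_quotient S q a); auto.
  - intros z [Hz Hza]. unfold unit_disk in Hz. unfold q, g, schur_step, blaschke.
    field. repeat split; solve_neq0.
  - unfold q.
    Clim_auto; apply Clim_id_within.
Qed.

Theorem pick3_nonneg_schur_function (S : C -> C) :
  pick3_nonneg S unit_disk -> schur_function S.
Proof.
  intros HS. split.
  - intros z Hz. exact (pick3_nonneg_ex_derive S HS z Hz).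
  - exact (proj1 (pick2_nonneg_schwarz_pick S unit_disk (fun x H => H) dense_unit_disk
                    (pick3_nonneg_pick2 S unit_disk dense_unit_disk HS))).
Qed.

(** * Iterated removal of discrete sets *)

Lemma iterated_removal_open_dense (Dj Zj : nat -> C -> Prop) :
  (forall z, Dj 0%nat z <-> unit_disk z) ->
  (forall j, isolated_in (Zj j) (Dj j)) ->
  (forall j z, Dj (S j) z <-> (Dj j z /\ ~ Zj j z)) ->
  forall j, open (Dj j) /\ (forall z, Dj j z -> unit_disk z) /\ dense_disk (Dj j).
Proof.
  intros H0 Hiso Hstep j. induction j as [|j [Hopen [Hsub Hdense]]].
  - replace (Dj 0%nat) with unit_disk
      by (extensionality z; apply propositional_extensionality; symmetry; apply H0).
    split; [exact open_unit_disk|]. split; [auto | exact dense_unit_disk].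
  - replace (Dj (S j)) with (fun z => Dj j z /\ ~ Zj j z)
      by (extensionality z; apply propositional_extensionality; symmetry; apply Hstep).
    split; [apply open_remove_isolated; auto|].
    split; [intros z [Hz _]; auto | apply dense_remove_isolated; auto].
Qed.

Theorem corollary6p2 (Dj Zj : nat -> C -> Prop) :
  (forall z, Dj 0%nat z <-> unit_disk z) ->
  (forall j, discrete_in (Zj j) (Dj j)) ->
  (forall j z, Dj (S j) z <-> (Dj j z /\ ~ Zj j z)) ->
  forall j, hindmarsh_property 3 (Dj j).
Proof.
  intros H0 Hdisc Hstep j.
  destruct (iterated_removal_open_dense Dj Zj H0 (fun j => proj2 (proj2 (Hdisc j))) Hstep j)
    as [Hopen [Hsub Hdense]].
  split; [exact Hopen|]. split; [exact Hsub|].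
  intros f Hf.
  destruct (pick3_nonneg_extension f (Dj j) Hsub Hdense (fun z Hz Hd c => proj2 (Hf z Hz Hd c)))
    as [S [HS HSf]].
  exists S. split; [apply pick3_nonneg_schur_function, HS | exact HSf].
Qed.
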